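(* Let $n,r,c$ be integers such that $r\geq 3$, $c\geq 1$, and $n\geq r(r-1)\big((r-1)(r-2)+1\big)c$. If $(r^2-r)$ divides $n$ and an affine plane of order $r$ exists, then there exists a graph $G$ on $n$ vertices with $\delta(G) = \left(1-\frac{r-2}{r^2-r}\right)n-c-1$ such that $\mathrm{mc}_r(G)\leq \frac{n}{r-1}-c$.
   Context: An affine plane of order $q$ is a $q$-uniform hypergraph on $q^2$ vertices (points) with $q(q+1)$ edges (lines) such that each pair of distinct points lies in exactly one line. $\delta(G)$ denotes the minimum degree of $G$. For a graph $G$ and a positive integer $r$, $\mathrm{mc}_r(G)$ is the largest integer $m$ such that in every coloring of the edges of $G$ with $r$ colors there is a monochromatic component (a maximal connected subgraph all of whose edges have one color) with at least $m$ vertices. *)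

From mathcomp Require Import all_boot.
Set Implicit Arguments. Unset Strict Implicit. Unset Printing Implicit Defensive.

Definition affine_plane_exists (q : nat) : Prop :=
  exists L : {set {set 'I_(q * q)}},
    [/\ #|L| = q * (q + 1),
        (forall l, l \in L -> #|l| = q) &
        (forall x y : 'I_(q * q), x != y ->
           exists! l, (l \in L) /\ (x \in l) /\ (y \in l))].

Definition simple_graph (n : nat) (e : rel 'I_n) : Prop :=
  symmetric e /\ irreflexive e.

(* minimum degree (for n >= 1 this is the true minimum, degrees being < n) *)
Definition mindeg (n : nat) (e : rel 'I_n) : nat :=
  \big[minn/n]_(x : 'I_n) #|[set y | e x y]|.

(* An r-colouring of the edges is given by a symmetric map on ordered pairs
   (its values on non-edges are irrelevant). *)
Definition edge_colouring_sym (n r : nat) (col : {ffun 'I_n * 'I_n -> 'I_r}) : bool :=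
  [forall u, forall v, col (u, v) == col (v, u)].

Definition mono_comp (n r : nat) (e : rel 'I_n) (col : {ffun 'I_n * 'I_n -> 'I_r})
  (i : 'I_r) (x : 'I_n) : {set 'I_n} :=
  [set y | connect (fun u v => e u v && (col (u, v) == i)) x y].

Definition forces_mono_comp (n r : nat) (e : rel 'I_n) (m : nat) : bool :=
  [forall col : {ffun 'I_n * 'I_n -> 'I_r},
     edge_colouring_sym col ==>
     [exists i : 'I_r, exists x : 'I_n, m <= #|mono_comp e col i x|]].

(* mc_r(G): the largest such m (all such m are <= n since components have
   at most n vertices, as soon as r >= 1). *)
Definition mc (n r : nat) (e : rel 'I_n) : nat :=
  \max_(m < n.+1 | forces_mono_comp r e m) m.

(* Blow up an affine plane of order r.  Fix a point o, a line [base] through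
   o, and number the other r lines through o as axes; colour i is the parallel
   class of axis i, so the class of [base] gets no colour.  Each point p becomes
   a block of [weight p] vertices, and one extra block (the type [None]) has
   N - r c vertices.  The label of a point block in colour i is the line of that
   class through the point; the extra block gets axis i, except in colour i0
   where it gets the parallel to axis i0 through a point q of [base].  Vertices
   are adjacent iff their labels agree in some colour, and the edge takes such a
   colour.  Hence a colour-i component stays inside one label class (one line,
   plus possibly the extra block), and a point block misses exactly the blocks
   on the parallel to [base] through it.  The weights (0 on axis i0 minus o,
   (r-1) c at o and q, N - c on the rest of [base], N elsewhere) make every
   label class weigh at most r N - c and every non-neighbourhood at most
   (r-2) N + c, with equality at o, on n = (r^2 - r) N vertices. *)

From mathcomp Require Import all_boot zify.
Set Implicit Arguments. Unset Strict Implicit. Unset Printing Implicit Defensive.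

(** * Blowing up weighted labelled types *)

Lemma card_tag_fibre (X : finType) (w : X -> nat) (x : X) :
  #|[pred y : {x : X & 'I_(w x)} | tag y == x]| = w x.
Proof.
rewrite -(card_sig (tagged_with (fun x => 'I_(w x)) x)).
by rewrite -(bij_eq_card (tag_with_bij (fun x => 'I_(w x)) x)) card_ord.
Qed.

Lemma fibre_map_exists (X : finType) (w : X -> nat) (n : nat) :
  \sum_x w x = n -> exists typ : 'I_n -> X,
    forall P : pred X, #|[set u | P (typ u)]| = \sum_(x | P x) w x.
Proof.
move=> sum_w; pose T := {x : X & 'I_(w x)}.
have card_T : #|{: T}| = n.
  rewrite card_tagged sumnE big_map big_enum -sum_w.
  by apply: eq_bigr => x _; rewrite card_ord.
pose h (u : 'I_n) : T := enum_val (cast_ord (esym card_T) u).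
have h_bij : bijective h.
  exists (fun y => cast_ord card_T (enum_rank y)) => [u|y].
    by rewrite /h enum_valK cast_ordKV.
  by rewrite /h cast_ordK enum_rankK.
exists (fun u => tag (h u)) => P.
have -> : [set u | P (tag (h u))] = h @^-1: [set y | P (tag y)].
  by apply/setP => u; rewrite !inE.
rewrite on_card_preimset; last exact: onW_bij.
rewrite -sum1_card (partition_big (fun y : T => tag y) P) => [|y]; last by rewrite inE.
apply: eq_bigr => x Px; rewrite sum1_card -(card_tag_fibre w x).
by apply: eq_card => y; rewrite unfold_in /= inE andb_idl // => /eqP ->.
Qed.

Lemma sum_option (T : finType) (P : pred (option T)) (F : option T -> nat) :
  \sum_(y | P y) F y =
  (if P None then F None else 0) + \sum_(p | P (Some p)) F (Some p).
Proof.
rewrite big_mkcond (bigD1 None) //= [in RHS]big_mkcond; congr (_ + _).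
rewrite (reindex_omap Some id) //=; last by case.
by apply: eq_bigl => p; rewrite eqxx.
Qed.

Lemma leq_sum_zero_out (T : finType) (P Q : pred T) (F : T -> nat) :
  (forall x, P x -> ~~ Q x -> F x = 0) -> \sum_(x | P x) F x <= \sum_(x | Q x) F x.
Proof.
move=> F0; rewrite (bigID Q) /= [X in _ + X]big1 ?addn0 => [|x /andP [] /F0 //].
rewrite [X in _ <= X](bigID P) /= (eq_bigl _ _ (fun x => andbC (Q x) (P x))).
exact: leq_addr.
Qed.

Section MinimumDegree.
Variables (n : nat) (e : rel 'I_n).

Lemma mindeg_le_deg u : mindeg e <= #|[set v | e u v]|.
Proof.
rewrite /mindeg; elim: (index_enum _) (mem_index_enum u) => // x s IHs.
rewrite big_cons in_cons => /orP [/eqP <-|/IHs]; first exact: geq_minl.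
exact/leq_trans/geq_minr.
Qed.

Lemma mindeg_eq_deg u :
  (forall v, #|[set y | e u y]| <= #|[set y | e v y]|) ->
  mindeg e = #|[set v | e u v]|.
Proof.
move=> deg_u_min; apply/eqP; rewrite eqn_leq mindeg_le_deg /mindeg.
apply: (big_ind (leq #|[set v | e u v]|)) => [|a b|v _]; last exact: deg_u_min.
- by apply: leq_trans (max_card _) _; rewrite card_ord.
- by rewrite leq_min => -> ->.
Qed.

End MinimumDegree.

Lemma mono_comp_sub (T : eqType) (n r : nat) (e : rel 'I_n)
    (col : {ffun 'I_n * 'I_n -> 'I_r}) (i : 'I_r) (f : 'I_n -> T) (x : 'I_n) :
  (forall u v, e u v -> col (u, v) = i -> f u = f v) ->
  mono_comp e col i x \subset [set y | f y == f x].
Proof.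
move=> f_const; apply/subsetP => y; rewrite !inE => /connectP [p].
elim: p x => [|z p IHp] x /=; first by move=> _ ->.
by case/andP => /andP [exz /eqP /(f_const _ _ exz) ->] /IHp.
Qed.

Lemma mc_le (n r K : nat) (e : rel 'I_n) (col : {ffun 'I_n * 'I_n -> 'I_r}) :
  edge_colouring_sym col -> (forall i x, #|mono_comp e col i x| <= K) ->
  mc r e <= K.
Proof.
move=> col_sym small; apply/bigmax_leqP => m /forallP /(_ col) /implyP /(_ col_sym).
by case/existsP => i /existsP [x /leq_trans]; apply.
Qed.

Section LabelledBlowUp.
Variables (X : finType) (Lab : eqType) (r n : nat).
Variables (lab : X -> 'I_r -> Lab) (w : X -> nat).
Hypothesis r_gt0 : 0 < r.

Definition share x y := [exists i, lab x i == lab y i].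

Lemma share_refl x : share x x.
Proof. by apply/existsP; exists (Ordinal r_gt0). Qed.

Lemma share_sym x y : share x y = share y x.
Proof. by apply/existsP/existsP => -[i]; exists i; rewrite eq_sym. Qed.

Section Graph.
Variable typ : 'I_n -> X.
Hypothesis card_typ :
  forall P : pred X, #|[set u | P (typ u)]| = \sum_(x | P x) w x.

Definition blowup : rel 'I_n := fun u v => (u != v) && share (typ u) (typ v).

Lemma blowup_simple : simple_graph blowup.
Proof. by split=> [u v|u]; rewrite /blowup ?eqxx // eq_sym share_sym. Qed.

Lemma weight_typ_gt0 u : 0 < w (typ u).
Proof.
have := card_typ (pred1 (typ u)); rewrite big_pred1_eq => <-.
by apply/card_gt0P; exists u; rewrite inE /=.
Qed.

Lemma deg_blowup u :
  #|[set v | blowup u v]| + 1 + \sum_(y | ~~ share (typ u) y) w y = n.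
Proof.
have -> : #|[set v | blowup u v]| + 1 = #|[set v | share (typ u) (typ v)]|.
  have -> : [set v | share (typ u) (typ v)] = u |: [set v | blowup u v].
    apply/setP => v; rewrite !inE /blowup.
    by case: (eqVneq v u) => [->|] //=; rewrite share_refl.
  by rewrite cardsU1 inE /blowup eqxx addnC.
rewrite -(card_typ (fun y => ~~ share (typ u) y)) -cardsUI.
have -> : [set v | share (typ u) (typ v)] :&: [set v | ~~ share (typ u) (typ v)] = set0.
  by apply/setP => v; rewrite !inE andbN.
have -> : [set v | share (typ u) (typ v)] :|: [set v | ~~ share (typ u) (typ v)] = setT.
  by apply/setP => v; rewrite !inE orbN.
by rewrite cards0 addn0 cardsT card_ord.
Qed.

Definition blowup_colouring : {ffun 'I_n * 'I_n -> 'I_r} :=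
  [ffun p => odflt (Ordinal r_gt0) [pick i | lab (typ p.1) i == lab (typ p.2) i]].

Lemma blowup_colouring_sym : edge_colouring_sym blowup_colouring.
Proof.
apply/forallP => u; apply/forallP => v; rewrite !ffunE /=.
by rewrite (eq_pick (fun i => eq_sym (lab (typ v) i) (lab (typ u) i))).
Qed.

Lemma blowup_colouring_lab u v :
  blowup u v ->
  lab (typ u) (blowup_colouring (u, v)) = lab (typ v) (blowup_colouring (u, v)).
Proof.
case/andP => _ /existsP [i lab_i]; rewrite ffunE /=.
by case: pickP => [j /eqP //|/(_ i)]; rewrite lab_i.
Qed.

Lemma card_mono_comp_blowup i x :
  #|mono_comp blowup blowup_colouring i x| <= \sum_(y | lab y i == lab (typ x) i) w y.
Proof.
rewrite -(card_typ (fun y => lab y i == lab (typ x) i)); apply: subset_leq_card.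
apply: (mono_comp_sub (f := fun u => lab (typ u) i)) => u v /blowup_colouring_lab.
by move=> + <-.
Qed.

End Graph.

Lemma blowup_graph (K D : nat) :
  \sum_x w x = n ->
  (forall x i, \sum_(y | lab y i == lab x i) w y <= K) ->
  (forall x, 0 < w x -> \sum_(y | ~~ share x y) w y <= D) ->
  (exists2 x0, 0 < w x0 & \sum_(y | ~~ share x0 y) w y = D) ->
  exists e : rel 'I_n, [/\ simple_graph e, mindeg e + D + 1 = n & mc r e <= K].
Proof.
move=> /fibre_map_exists [typ card_typ] small_class few_nonshare [x0 w_x0 nonshare_x0].
exists (blowup typ); split; first exact: blowup_simple.
- have [u0 typ_u0] : exists u0, typ u0 = x0.
    move: w_x0; have := card_typ (pred1 x0); rewrite big_pred1_eq => <-.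
    by case/card_gt0P => u; rewrite inE => /eqP; exists u.
  have deg_u0 := deg_blowup card_typ u0; rewrite typ_u0 nonshare_x0 in deg_u0.
  rewrite (mindeg_eq_deg (u := u0)) => [|v]; first lia.
  have := deg_blowup card_typ v; have := few_nonshare _ (weight_typ_gt0 card_typ v).
  lia.
- apply: (mc_le (blowup_colouring_sym typ)) => i x.
  exact: leq_trans (card_mono_comp_blowup card_typ i x) (small_class _ _).
Qed.

End LabelledBlowUp.

(** * Affine planes *)

Lemma enum_set_ord (T : finType) (A : {set T}) (n : nat) :
  #|A| = n -> exists f : 'I_n -> T, injective f /\ [set f i | i : 'I_n] = A.
Proof.
move=> card_A; exists (fun i => enum_val (cast_ord (esym card_A) i)); split.
  by move=> i j /enum_val_inj /cast_ord_inj.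
apply/setP => y; apply/imsetP/idP => [[i _ ->]|yA]; first exact: enum_valP.
by exists (cast_ord card_A (enum_rank_in yA y)); rewrite ?cast_ordK ?enum_rankK_in.
Qed.

Section AffinePlane.
Variable r : nat.
Local Notation point := 'I_(r * r).
Variable L : {set {set point}}.
Hypothesis r_gt1 : 1 < r.
Hypothesis card_line : forall l, l \in L -> #|l| = r.
Hypothesis line_unique :
  forall x y : point, x != y -> exists! l, l \in L /\ x \in l /\ y \in l.

Definition join_line (x y : point) : {set point} :=
  odflt set0 [pick l in L | (x \in l) && (y \in l)].

Lemma join_lineP x y :
  x != y -> [/\ join_line x y \in L, x \in join_line x y & y \in join_line x y].
Proof.
move=> xy; rewrite /join_line; case: pickP => [l /andP [-> /andP [-> ->]] //|none].
have [l [[lL [xl yl]] _]] := line_unique xy.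
by have := none l; rewrite lL xl yl.
Qed.

Lemma join_line_uniq x y l :
  x != y -> l \in L -> x \in l -> y \in l -> l = join_line x y.
Proof.
move=> xy lL xl yl; have [jL xj yj] := join_lineP xy.
have [m [_ m_uniq]] := line_unique xy.
by rewrite -(m_uniq l) ?(m_uniq (join_line x y)).
Qed.

Lemma lines_meet_once l m x y : l \in L -> m \in L -> l != m ->
  x \in l -> x \in m -> y \in l -> y \in m -> x = y.
Proof.
move=> lL mL lm xl xm yl ym; apply/eqP; apply: contraNT lm => xy.
by rewrite (join_line_uniq xy lL xl yl) (join_line_uniq xy mL xm ym).
Qed.

Lemma card_lineD1 l x : l \in L -> x \in l -> #|l :\ x| = r - 1.
Proof. by move=> lL xl; have := cardsD1 x l; rewrite xl card_line //; lia. Qed.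

Definition pencil p := [set l in L | p \in l].

Lemma card_pencil p : #|pencil p| = r.+1.
Proof.
have fibre l : l \in pencil p -> #|[set q | (q != p) && (join_line p q == l)]| = r - 1.
  rewrite inE => /andP [lL pl]; rewrite -(card_lineD1 lL pl).
  apply: eq_card => q; rewrite !inE; case: eqVneq => //= qp.
  have pq : p != q by rewrite eq_sym.
  have [jL pj qj] := join_lineP pq.
  by apply/eqP/idP => [<- //|ql]; rewrite -(join_line_uniq pq lL).
have count :
    \sum_(l in pencil p) #|[set q | (q != p) && (join_line p q == l)]| = r * r - 1.
  have <- : #|[set~ p]| = r * r - 1 by rewrite cardsC1 card_ord subn1.
  rewrite -sum1_card.
  rewrite (partition_big (join_line p) (mem (pencil p))) => [|q]; last first.
    by rewrite !inE eq_sym => /join_lineP [-> ->].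
  apply: eq_bigr => l _; rewrite sum1_card; apply: eq_card => q.
  by rewrite !inE -topredE /= !inE.
have r1_gt0 : 0 < r - 1 by rewrite subn_gt0.
apply/eqP; rewrite -(eqn_pmul2r r1_gt0) -sum_nat_const.
rewrite -(eq_bigr _ fibre) count; apply/eqP; nia.
Qed.

Lemma playfair l p : l \in L -> p \notin l ->
  exists m, [/\ m \in L, p \in m &
    forall m', m' \in L -> p \in m' -> [disjoint m' & l] = (m' == m)].
Proof.
move=> lL pl; have p_neq x : x \in l -> p != x by move=> xl; apply: contraNneq pl => ->.
pose J := [set join_line p x | x in l].
have J_pencil : J \subset pencil p.
  apply/subsetP => _ /imsetP [x xl ->].
  by have [jL pj _] := join_lineP (p_neq x xl); rewrite inE jL pj.
have card_J : #|J| = r.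
  rewrite card_in_imset ?card_line // => x y xl yl jxy.
  have [jL pj xj] := join_lineP (p_neq x xl); have [_ _ yj] := join_lineP (p_neq y yl).
  apply: (lines_meet_once jL lL) => //; last by rewrite jxy.
  by apply: contraNneq pl => <-.
have /cards1P [m Jm] : #|pencil p :\: J| == 1.
  by rewrite cardsD (setIidPr J_pencil) card_J card_pencil subSnn.
have disjoint_J m' : m' \in L -> p \in m' -> [disjoint m' & l] = (m' \notin J).
  move=> m'L pm'; apply/idP/idP => [m'l|].
    apply/imsetP => -[x xl m'x]; have [_ _ xj] := join_lineP (p_neq x xl).
    by move: xl; rewrite -m'x in xj; rewrite (disjointFr m'l xj).
  move=> m'J; rewrite -setI_eq0; apply/eqP/setP => x; rewrite !inE.
  apply/negbTE/andP => -[xm' xl]; move/imsetP: m'J; apply; exists x => //.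
  exact: join_line_uniq (p_neq x xl) m'L pm' xm'.
have: m \in pencil p :\: J by rewrite Jm set11.
rewrite !inE => /andP [mJ /andP [mL pm]]; exists m; split=> // m' m'L pm'.
by rewrite disjoint_J // -in_set1 -Jm !inE m'L pm' !andbT.
Qed.

Definition parallel (m l : {set point}) := (m == l) || [disjoint m & l].

Lemma parallel_refl l : parallel l l.
Proof. by rewrite /parallel eqxx. Qed.

Lemma parallel_sym m l : parallel m l = parallel l m.
Proof. by rewrite /parallel eq_sym disjoint_sym. Qed.

Lemma parallel_uniq l m1 m2 p : l \in L -> m1 \in L -> m2 \in L ->
  p \in m1 -> p \in m2 -> parallel m1 l -> parallel m2 l -> m1 = m2.
Proof.
move=> lL m1L m2L pm1 pm2.
case/orP=> [/eqP m1l|m1l]; case/orP=> [/eqP m2l|m2l]; first by rewrite m1l m2l.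
- by move: pm1; rewrite m1l (disjointFr m2l pm2).
- by move: pm2; rewrite m2l (disjointFr m1l pm1).
have [m [_ _ m_uniq]] := playfair lL (negbT (disjointFr m1l pm1)).
by move: m1l m2l; rewrite !m_uniq // => /eqP -> /eqP ->.
Qed.

Lemma parallel_meet_eq a b x : a \in L -> b \in L ->
  x \in a -> x \in b -> parallel a b -> a = b.
Proof.
by move=> aL bL xa xb ab; exact: (parallel_uniq bL aL bL xa xb ab (parallel_refl b)).
Qed.

Lemma parallel_trans a b c : a \in L -> b \in L -> c \in L ->
  parallel a b -> parallel b c -> parallel a c.
Proof.
move=> aL bL cL ab bc.
have [ac|] := boolP [disjoint a & c]; first by rewrite /parallel ac orbT.
rewrite -setI_eq0 => /set0Pn [x]; rewrite inE => /andP [xa xc].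
rewrite parallel_sym in bc.
by rewrite (parallel_uniq bL aL cL xa xc ab bc) parallel_refl.
Qed.

Lemma meet_of_not_parallel a b : ~~ parallel a b -> exists2 x, x \in a & x \in b.
Proof.
rewrite /parallel negb_or -setI_eq0 => /andP [_ /set0Pn [x]].
by rewrite inE => /andP [xa xb]; exists x.
Qed.

Definition par_line (l : {set point}) (p : point) : {set point} :=
  odflt set0 [pick m in L | (p \in m) && parallel m l].

Lemma par_lineP l p : l \in L ->
  [/\ par_line l p \in L, p \in par_line l p & parallel (par_line l p) l].
Proof.
move=> lL; rewrite /par_line; case: pickP => [m /andP [-> /andP [-> ->]] //|none].
case: (boolP (p \in l)) => pl; first by have := none l; rewrite lL pl parallel_refl.
have [m [mL pm m_uniq]] := playfair lL pl.
by have := none m; rewrite mL pm /parallel (m_uniq m) ?eqxx ?orbT.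
Qed.

Lemma par_line_eq l p m : l \in L -> m \in L ->
  p \in m -> parallel m l -> par_line l p = m.
Proof.
move=> lL mL pm ml; have [pL ppl pll] := par_lineP p lL.
exact: parallel_uniq lL pL mL ppl pm pll ml.
Qed.

(** * The blown-up plane *)

Section Construction.
Variables (o q : point) (base : {set point}) (axis : 'I_r -> {set point}) (i0 : 'I_r).
Hypotheses (base_L : base \in L) (o_base : o \in base).
Hypotheses (q_base : q \in base) (q_neq_o : q != o).
Hypotheses (axis_L : forall i, axis i \in L) (o_axis : forall i, o \in axis i).
Hypotheses (axis_neq_base : forall i, axis i != base) (axis_inj : injective axis).
Hypothesis axis_onto :
  forall l, l \in L -> o \in l -> l != base -> exists i, axis i = l.

Local Notation l0 := (axis i0).

Lemma meet_base_l0 x : x \in base -> x \in l0 -> x = o.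
Proof.
move=> xb xl; apply: (lines_meet_once base_L (axis_L i0)) => //.
by rewrite eq_sym axis_neq_base.
Qed.

Lemma q_notin_l0 : q \notin l0.
Proof. by apply/negP => /(meet_base_l0 q_base) /eqP; rewrite (negbTE q_neq_o). Qed.

Lemma parallel_axis i j : parallel (axis i) (axis j) = (i == j).
Proof.
apply/idP/eqP => [ij|->]; last exact: parallel_refl.
exact/axis_inj/(parallel_meet_eq (axis_L i) (axis_L j) (o_axis i) (o_axis j)).
Qed.

Lemma parallel_base_axis i : parallel base (axis i) = false.
Proof.
apply/negbTE/negP => /(parallel_meet_eq base_L (axis_L i) o_base (o_axis i)) bi.
by move: (axis_neq_base i); rewrite bi eqxx.
Qed.

Lemma on_axis_or_base p : p != o -> p \in base \/ exists i, p \in axis i.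
Proof.
move=> po; have op : o != p by rewrite eq_sym.
have [jL oj pj] := join_lineP op.
have [<-|jb] := eqVneq (join_line o p) base; first by left.
by have [i ji] := axis_onto jL oj jb; right; exists i; rewrite ji.
Qed.

Variables (N c : nat).
Hypotheses (c_gt0 : 0 < c) (rc_le_N : r * c <= N).

Definition weight (p : point) : nat :=
  if p == o then (r - 1) * c
  else if p \in l0 then 0
  else if p == q then (r - 1) * c
  else if p \in base then N - c
  else N.

Definition type_weight (x : option point) : nat :=
  if x is Some p then weight p else N - r * c.

Definition label (x : option point) (i : 'I_r) : {set point} :=
  if x is Some p then par_line (axis i) p
  else if i == i0 then par_line l0 q else axis i.

Lemma rc_split : (r - 1) * c + c = r * c.
Proof. by rewrite -{2}[c]mul1n -mulnDl subnK // ltnW. Qed.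

Lemma c_le_N : c <= N.
Proof. by apply: leq_trans rc_le_N; rewrite leq_pmull // ltnW. Qed.

Lemma weight_o : weight o = (r - 1) * c.
Proof. by rewrite /weight eqxx. Qed.

Lemma weight_q : weight q = (r - 1) * c.
Proof. by rewrite /weight (negbTE q_neq_o) (negbTE q_notin_l0) eqxx. Qed.

Lemma weight_l0 p : p \in l0 -> p != o -> weight p = 0.
Proof. by move=> pl po; rewrite /weight (negbTE po) pl. Qed.

Lemma weight_base p : p \in base -> p != o -> p != q -> weight p = N - c.
Proof.
move=> pb po pq; have pl : p \notin l0 by apply: contra po => /(meet_base_l0 pb) ->.
by rewrite /weight (negbTE po) (negbTE pl) (negbTE pq) pb.
Qed.

Lemma weight_off p : p \notin base -> p \notin l0 -> weight p = N.
Proof.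
move=> pb pl; have po : p != o by apply: contraNneq pb => ->.
have pq : p != q by apply: contraNneq pb => ->.
by rewrite /weight (negbTE po) (negbTE pl) (negbTE pq) (negbTE pb).
Qed.

Lemma weight_base_le p : p \in base -> p != o -> weight p <= N - c.
Proof.
move=> pb po; have [->|pq] := eqVneq p q; last by rewrite weight_base.
by rewrite weight_q; have := rc_split; lia.
Qed.

Lemma weight_le p : weight p <= N.
Proof.
have [->|po] := eqVneq p o; first by rewrite weight_o; have := rc_split; lia.
have [pb|pb] := boolP (p \in base).
  exact: leq_trans (weight_base_le pb po) (leq_subr _ _).
by have [pl|pl] := boolP (p \in l0); rewrite ?(weight_l0 pl po) ?(weight_off pb pl).
Qed.

Lemma sum_weight_le (A : {set point}) z :
  z \in A -> \sum_(p in A) weight p <= weight z + (#|A| - 1) * N.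
Proof.
move=> zA; rewrite (big_setD1 z zA) leq_add2l.
have -> : #|A| - 1 = #|A :\ z| by rewrite (cardsD1 z A) zA add1n subn1.
by rewrite -sum_nat_const; apply: leq_sum => p _; apply: weight_le.
Qed.

Lemma q_in_baseD1 : q \in base :\ o.
Proof. by rewrite !inE q_neq_o q_base. Qed.

Lemma sum_base_rest : \sum_(p in base :\ o :\ q) weight p = (r - 2) * (N - c).
Proof.
have -> : r - 2 = #|base :\ o :\ q|.
  have := cardsD1 q (base :\ o); rewrite q_in_baseD1 (card_lineD1 base_L o_base) /=.
  by rewrite -[2]/(1 + 1) subnDA => ->; rewrite addKn.
rewrite -sum_nat_const; apply: eq_bigr => p; rewrite !inE => /and3P [pq po pb].
exact: weight_base.
Qed.

Lemma sum_base : \sum_(p in base) weight p = (r - 2) * N + c + (r - 1) * c.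
Proof.
rewrite (big_setD1 o o_base) (big_setD1 q q_in_baseD1) /=.
rewrite sum_base_rest weight_o weight_q.
rewrite [RHS]addnC; congr (_ + _).
have -> : r - 1 = (r - 2).+1 by lia.
by rewrite mulSn -addnA -mulnDr subnKC ?c_le_N // addnC.
Qed.

Lemma base_l0_I : base :&: l0 = [set o].
Proof.
apply/setP => x; rewrite !inE; apply/andP/eqP => [[xb xl]|->].
  exact: meet_base_l0.
by rewrite o_base o_axis.
Qed.

Lemma sum_off_base : \sum_(p | p \notin base) weight p = (r * r - (r + r - 1)) * N.
Proof.
rewrite (bigID (mem l0)) /= big1 ?add0n => [|p /andP [pb pl]]; last first.
  by apply: weight_l0 => //; apply: contraNneq pb => ->.
have card_Ul0 : #|base :|: l0| = r + r - 1.
  have := cardsUI base l0; rewrite base_l0_I cards1 (card_line base_L).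
  by rewrite (card_line (axis_L i0)); lia.
have <- : #|~: (base :|: l0)| = r * r - (r + r - 1)
  by have := cardsC (base :|: l0); rewrite card_ord card_Ul0; lia.
rewrite -sum_nat_const; apply: eq_big => [p|p]; first by rewrite !inE negb_or.
by case/andP; apply: weight_off.
Qed.

Lemma sum_type_weight : \sum_x type_weight x = (r * r - r) * N.
Proof.
rewrite sum_option /= (bigID (mem base)) /= sum_base sum_off_base.
have -> : N - r * c + ((r - 2) * N + c + (r - 1) * c + (r * r - (r + r - 1)) * N)
          = (1 + (r - 2) + (r * r - (r + r - 1))) * N.
  by rewrite !mulnDl mul1n; have := rc_split; lia.
have : 2 * r <= r * r by apply: leq_mul.
by move=> ?; congr (_ * N); lia.
Qed.

Lemma label_L x i : label x i \in L.
Proof.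
case: x => [p|] /=; first by have [] := par_lineP p (axis_L i).
by case: ifP => _; [have [] := par_lineP q (axis_L i0) | apply: axis_L].
Qed.

Lemma label_parallel x i : parallel (label x i) (axis i).
Proof.
case: x => [p|] /=; first by have [] := par_lineP p (axis_L i).
case: ifP => [/eqP ->|_]; last exact: parallel_refl.
by have [] := par_lineP q (axis_L i0).
Qed.

Lemma label_point_eq p i m : m \in L -> parallel m (axis i) ->
  (label (Some p) i == m) = (p \in m).
Proof.
move=> mL mi /=; apply/eqP/idP => [<-|pm]; first by have [] := par_lineP p (axis_L i).
exact: par_line_eq (axis_L i) mL pm mi.
Qed.

Lemma share_points p p' :
  share label (Some p) (Some p') = (p' \notin par_line base p :\ p).
Proof.
have [pbL ppb pbb] := par_lineP p base_L.
rewrite !inE negb_and negbK; apply/existsP/orP => [[i /eqP same]|].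
  have [->|p'p] := eqVneq p' p; [by left | right; apply/negP => p'pb].
  have [mL pm mi] := par_lineP p (axis_L i).
  have p'm : p' \in par_line (axis i) p.
    by rewrite [par_line _ p]same; have [] := par_lineP p' (axis_L i).
  have m_pb : par_line (axis i) p = par_line base p.
    apply/eqP; apply: contraTT p'p => neq; apply/negPn/eqP.
    exact: lines_meet_once mL pbL neq p'm p'pb pm ppb.
  rewrite m_pb in mi; rewrite parallel_sym in pbb.
  by have := parallel_trans base_L pbL (axis_L i) pbb mi; rewrite parallel_base_axis.
case=> [/eqP ->|p'pb]; first by exists i0.
have pp' : p != p' by apply: contraNneq p'pb => <-.
have [jL pj p'j] := join_lineP pp'; set j := join_line p p' in jL pj p'j *.
have [kL ok kj] := par_lineP o jL.
have kb : par_line j o != base.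
  apply: contraNneq p'pb => kb; have jb : parallel j base by rewrite parallel_sym -kb.
  by rewrite (par_line_eq base_L jL pj jb).
have [i ki] := axis_onto kL ok kb.
have ji : parallel j (axis i) by rewrite ki parallel_sym.
exists i; apply/eqP.
by rewrite /= (par_line_eq (axis_L i) jL pj ji) (par_line_eq (axis_L i) jL p'j ji).
Qed.

Lemma share_none_axis p i : i != i0 -> p \in axis i -> share label None (Some p).
Proof.
move=> ii pi; apply/existsP; exists i.
by rewrite /= (negbTE ii) (par_line_eq (axis_L i) (axis_L i) pi (parallel_refl _)).
Qed.

Lemma share_none_q : share label None (Some q).
Proof. by apply/existsP; exists i0; rewrite /= eqxx. Qed.

Lemma share_none_o : share label None (Some o).
Proof.
have /card_gt0P [i] : 0 < #|[set~ i0]| by rewrite cardsC1 card_ord -ltnS prednK // ltnW.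
by rewrite !inE => ii; apply: share_none_axis ii (o_axis i).
Qed.

Lemma class_light_point i m : m \in L -> parallel m (axis i) ->
  exists2 z, z \in m & (if label None i == m then N - r * c else 0) + weight z <= N - c.
Proof.
move=> mL mi; have rc := rc_split.
have none_le : (if label None i == m then N - r * c else 0) <= N - r * c by case: ifP.
have [om|om] := boolP (o \in m); first by exists o => //; rewrite weight_o; lia.
have [ii0|ii0] := eqVneq i i0.
  subst i; have [mq|mq] := eqVneq m (par_line l0 q).
    exists q; last by rewrite weight_q; lia.
    by rewrite mq; have [] := par_lineP q (axis_L i0).
  have mb : ~~ parallel m base.
    apply: contraFN (parallel_base_axis i0) => mb.
    by apply: (parallel_trans base_L mL (axis_L i0)) mi; rewrite parallel_sym.
  have [z zm zb] := meet_of_not_parallel mb; exists z => //.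
  rewrite /= eqxx eq_sym (negbTE mq) add0n weight_base_le //.
  by apply: contraNneq om => <-.
have ml : ~~ parallel m l0.
  apply: contra ii0 => ml; rewrite -parallel_axis.
  by apply: (parallel_trans (axis_L i) mL (axis_L i0)) ml; rewrite parallel_sym.
have [z zm zl] := meet_of_not_parallel ml; exists z => //.
have zo : z != o by apply: contraNneq om => <-.
rewrite /= (negbTE ii0) weight_l0 // addn0.
by case: eqP => // im; move: om; rewrite -im o_axis.
Qed.

Lemma class_weight x i :
  \sum_(y | label y i == label x i) type_weight y <= r * N - c.
Proof.
have mL := label_L x i; have mi := label_parallel x i.
rewrite sum_option (eq_bigl (fun p => p \in label x i)) => [|p].
  2: exact: label_point_eq.
have [z zm z_light] := class_light_point mL mi.
apply: leq_trans (leq_add (leqnn _) (sum_weight_le zm)) _; rewrite (card_line mL) /=.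
have : r * N = N + (r - 1) * N by rewrite -{2}[N]mul1n -mulnDl subnKC // ltnW.
by have := c_le_N; move: z_light; case: ifP => _; lia.
Qed.

Lemma sum_nonshare_point p :
  \sum_(y | ~~ share label (Some p) y) type_weight y =
  (if share label None (Some p) then 0 else N - r * c)
    + \sum_(p' in par_line base p :\ p) weight p'.
Proof.
rewrite sum_option (share_sym label (Some p) None) if_neg /=.
by congr (_ + _); apply: eq_bigl => p'; rewrite share_points negbK.
Qed.

Lemma sum_baseD1 p : p \in base ->
  weight p + \sum_(p' in base :\ p) weight p' = (r - 2) * N + c + (r - 1) * c.
Proof. by move=> pb; rewrite -sum_base (big_setD1 p pb). Qed.

Lemma nonshare_weight_o :
  \sum_(y | ~~ share label (Some o) y) type_weight y = (r - 2) * N + c.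
Proof.
rewrite sum_nonshare_point share_none_o add0n.
rewrite (par_line_eq base_L base_L o_base (parallel_refl _)).
by have := sum_baseD1 o_base; rewrite weight_o addnC => /addIn.
Qed.

Lemma nonshare_weight_point p : 0 < weight p ->
  \sum_(y | ~~ share label (Some p) y) type_weight y <= (r - 2) * N + c.
Proof.
move=> wp; rewrite sum_nonshare_point.
have [pb|pb] := boolP (p \in base).
  rewrite (par_line_eq base_L base_L pb (parallel_refl _)).
  have := sum_baseD1 pb; have := rc_split; set S := \sum_(_ in base :\ p) _.
  have [->|po] := eqVneq p o; first by rewrite share_none_o weight_o; lia.
  have [->|pq] := eqVneq p q; first by rewrite share_none_q weight_q; lia.
  rewrite weight_base //; case: ifP => _; lia.
have po : p != o by apply: contraNneq pb => ->.
have pl : p \notin l0 by apply: contraTN wp => pl; rewrite weight_l0.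
have [|[i pi]] := on_axis_or_base po; first by rewrite (negbTE pb).
have ii : i != i0 by apply: contraNneq pl => <-.
rewrite (share_none_axis ii pi) add0n.
have [mL pm mb] := par_lineP p base_L; set m := par_line base p in mL pm mb *.
have ml : ~~ parallel m l0.
  apply: contraFN (parallel_base_axis i0) => ml.
  by apply: (parallel_trans base_L mL (axis_L i0)) ml; rewrite parallel_sym.
have [z zm zl] := meet_of_not_parallel ml.
have zo : z != o.
  apply: contraNneq pb => zo; have om : o \in m by rewrite -zo.
  by rewrite -(parallel_meet_eq mL base_L om o_base mb).
have zmp : z \in m :\ p by rewrite !inE zm andbT; apply: contraNneq pl => <-.
apply: leq_trans (sum_weight_le zmp) _.
by rewrite weight_l0 // add0n (card_lineD1 mL pm) -subnDA leq_addr.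
Qed.

Lemma nonshare_weight_none :
  \sum_(y | ~~ share label None y) type_weight y <= (r - 2) * N + c.
Proof.
rewrite sum_option (share_refl label (ltnW r_gt1)) /= add0n.
apply: leq_trans (leq_sum_zero_out (Q := fun p => p \in base :\ o :\ q) _) _ => [p|].
  rewrite !inE => nshare.
  have po : p != o by apply: contraNneq nshare => ->; rewrite share_none_o.
  have pq : p != q by apply: contraNneq nshare => ->; rewrite share_none_q.
  rewrite po pq /= => pb.
  have [|[i pi]] := on_axis_or_base po; first by rewrite (negbTE pb).
  have [ii0|ii] := eqVneq i i0; last by rewrite (share_none_axis ii pi) in nshare.
  by rewrite ii0 in pi; apply: weight_l0.
by rewrite sum_base_rest (leq_trans (leq_mul (leqnn _) (leq_subr c N))) ?leq_addr.
Qed.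

Lemma plane_blowup_graph n : n = (r * r - r) * N ->
  exists e : rel 'I_n,
    [/\ simple_graph e, mindeg e + ((r - 2) * N + c) + 1 = n & mc r e <= r * N - c].
Proof.
move=> n_eq; apply: (blowup_graph (lab := label) (w := type_weight)).
- exact: ltnW.
- by rewrite sum_type_weight.
- exact: class_weight.
- by case=> [p /nonshare_weight_point|_]; last exact: nonshare_weight_none.
- exists (Some o); last exact: nonshare_weight_o.
  by rewrite /= weight_o muln_gt0 subn_gt0 r_gt1 c_gt0.
Qed.

End Construction.

Lemma affine_plane_graph (N c n : nat) :
  0 < c -> r * c <= N -> n = (r * r - r) * N ->
  exists e : rel 'I_n,
    [/\ simple_graph e, mindeg e + ((r - 2) * N + c) + 1 = n & mc r e <= r * N - c].
Proof.
move=> c_gt0 rc_le_N n_eq.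
have rr_gt0 : 0 < r * r by rewrite muln_gt0 ltnW.
pose o : point := Ordinal rr_gt0.
have /card_gt0P [base] : 0 < #|pencil o| by rewrite card_pencil.
rewrite inE => /andP [base_L o_base].
have [axis [axis_inj im_axis]] : exists axis : 'I_r -> {set point},
    injective axis /\ [set axis i | i : 'I_r] = pencil o :\ base.
  apply: enum_set_ord; have := cardsD1 base (pencil o).
  by rewrite card_pencil inE base_L o_base => -[].
have axis_in i : axis i \in pencil o :\ base by rewrite -im_axis imset_f.
have /card_gt0P [q] : 0 < #|base :\ o| by rewrite (card_lineD1 base_L o_base) subn_gt0.
rewrite !inE => /andP [q_neq_o q_base].
have axis_L i : axis i \in L by have := axis_in i; rewrite !inE => /and3P [].
have o_axis i : o \in axis i by have := axis_in i; rewrite !inE => /and3P [].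
have axis_neq_base i : axis i != base by have := axis_in i; rewrite !inE => /and3P [].
have axis_onto l : l \in L -> o \in l -> l != base -> exists i, axis i = l.
  move=> lL ol lb; have : l \in pencil o :\ base by rewrite !inE lb lL ol.
  by rewrite -im_axis => /imsetP [i _ ->]; exists i.
exact: (plane_blowup_graph (Ordinal (ltnW r_gt1)) base_L o_base q_base q_neq_o
          axis_L o_axis axis_neq_base axis_inj axis_onto c_gt0 rc_le_N n_eq).
Qed.

End AffinePlane.

Lemma rc_le_quotient r c N : 3 <= r ->
  r * (r - 1) * ((r - 1) * (r - 2) + 1) * c <= (r * r - r) * N -> r * c <= N.
Proof.
move=> r_ge3; have r1_gt0 : 0 < r - 1 by rewrite subn_gt0 ltnW.
have r_gt0 : 0 < r by rewrite ltnW // ltnW.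
have -> : r * r - r = r * (r - 1) by rewrite mulnBr muln1.
rewrite -!mulnA !leq_pmul2l // => le_N.
apply: leq_trans le_N; rewrite leq_mul2r; apply/orP; right.
by rewrite -{1}(subnK r_gt0) leq_add2r leq_pmulr // subn_gt0.
Qed.

Theorem theorem3p2 (n r c : nat) :
  3 <= r -> 1 <= c ->
  r * (r - 1) * ((r - 1) * (r - 2) + 1) * c <= n ->
  (r * r - r) %| n ->
  affine_plane_exists r ->
  exists e : rel 'I_n,
    [/\ simple_graph e,
        (* delta(G) = (1 - (r-2)/(r^2-r)) n - c - 1 *)
        mindeg e + c + 1 + (r - 2) * (n %/ (r * r - r)) = n &
        (* mc_r(G) <= n/(r-1) - c *)
        mc r e + c <= n %/ (r - 1)].
Proof.
move=> r_ge3 c_gt0 n_large dvd_n [L [_ card_line line_unique]].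
set N := n %/ (r * r - r).
have n_eq : n = (r * r - r) * N by rewrite mulnC divnK.
have rc_le_N : r * c <= N by apply: rc_le_quotient r_ge3 _; rewrite -n_eq.
have r_gt1 : 1 < r by apply: leq_trans r_ge3.
have [e [simple_e deg_e mc_e]] :=
  affine_plane_graph r_gt1 card_line line_unique c_gt0 rc_le_N n_eq.
exists e; split => //; first by rewrite -[in RHS]deg_e; lia.
have -> : n %/ (r - 1) = r * N.
  have -> : n = r * N * (r - 1) by rewrite n_eq mulnBl mulnBr muln1 mulnAC.
  by rewrite mulnK // subn_gt0.
have r_gt0 : 0 < r := ltnW r_gt1.
have c_le_rN : c <= r * N.
  exact: leq_trans (leq_pmull c r_gt0) (leq_trans rc_le_N (leq_pmull N r_gt0)).
by move: mc_e; lia.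
Qed.
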